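(* Let $d\ge 2$. For the Gilbert--Steiner problem in $\mathbb{R}^d$ with cost $c(x)=x^{1/2}$, every branching point of every solution has degree at most $d+1$.
   Context: Let $\mu^+,\mu^-$ be finite measures on $\mathbb{R}^d$ with finite supports and equal total mass. A $(\mu^+,\mu^-)$-flow consists of a finite vertex set $V\subset\mathbb{R}^d$ containing the support of $\mu^+-\mu^-$, a finite set $E$ of unordered pairs $\{x,y\}\subset V$, and non-zero reals $m(x,y)=-m(y,x)$ on edges such that $\mu^+-\mu^-=\sum_{\{x,y\}\in E} m(x,y)(\delta_y-\delta_x)$. The Gilbert functional is $\sum_{\{x,y\}\in E}c(|m(x,y)|)\,|x-y|$; a solution is a flow minimizing it. Branching points are vertices not in $\operatorname{supp}\mu^+\cup\operatorname{supp}\mu^-$. *)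

From HB Require Import structures.
From mathcomp Require Import all_boot all_order all_algebra.
From mathcomp Require Import reals.
Set Implicit Arguments. Unset Strict Implicit. Unset Printing Implicit Defensive.
Import Order.TTheory GRing.Theory Num.Theory.
Local Open Scope ring_scope.

Section Gilbert.
Variables (R : realType) (d : nat).

Notation point := 'rV[R]_d.

Definition edist (x y : point) : R :=
  Num.sqrt (\sum_(i < d) (x ord0 i - y ord0 i) ^+ 2).

(* A finite measure with finite support, given by its masses at points:
   mu x = mu({x}) >= 0, and only finitely many points carry mass. *)
Definition fin_supp_measure (mu : point -> R) : Prop :=
  (forall x, 0 <= mu x) /\ exists s : seq point, forall x, mu x != 0 -> x \in s.

Definition equal_mass (mup mum : point -> R) : Prop :=
  exists s : seq point, [/\ uniq s,
    (forall x, (mup x != 0) || (mum x != 0) -> x \in s) &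
    \sum_(x <- s) mup x = \sum_(x <- s) mum x].

(* A flow: vertex list V and edge list E; an edge (x, y, m) represents the
   unordered pair {x,y} with m(x,y) = m and m(y,x) = -m. *)
Record flow := Flow { fV : seq point; fE : seq (point * point * R) }.

Definition same_pair (e f : point * point * R) : bool :=
  ((e.1.1 == f.1.1) && (e.1.2 == f.1.2)) || ((e.1.1 == f.1.2) && (e.1.2 == f.1.1)).

Definition is_flow (mup mum : point -> R) (F : flow) : Prop :=
  [/\ (forall x, mup x - mum x != 0 -> x \in fV F),
      (forall e, e \in fE F -> [/\ e.1.1 \in fV F, e.1.2 \in fV F,
                                  e.1.1 != e.1.2 & e.2 != 0]),
      pairwise (fun e f => ~~ same_pair e f) (fE F) &
      (forall z, mup z - mum z =
         \sum_(e <- fE F) e.2 * ((z == e.1.2)%:R - (z == e.1.1)%:R))].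

Definition gilbert_cost (F : flow) : R :=
  \sum_(e <- fE F) Num.sqrt `|e.2| * edist e.1.1 e.1.2.

Definition is_solution (mup mum : point -> R) (F : flow) : Prop :=
  is_flow mup mum F /\
  forall G, is_flow mup mum G -> gilbert_cost F <= gilbert_cost G.

Definition degree (F : flow) (v : point) : nat :=
  count (fun e : point * point * R => (e.1.1 == v) || (e.1.2 == v)) (fE F).

Definition is_branching_point (mup mum : point -> R) (F : flow) (v : point) : Prop :=
  [/\ v \in fV F, mup v = 0 & mum v = 0].

End Gilbert.

(** At a branching point [v] of a minimiser, give each incident edge [e], of
mass [m] and far end [u], the pull vector [W_e = sqrt|m| (u - v) / |u - v|].
Detaching a set [P] of incident edges from [v], attaching them to
[w = v + eps T] with [T = sum_P W_e], and joining [w] to [v] by an edge that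
carries their net inflow [K] changes the cost by
[- eps |T|^2 + eps sqrt|K| |T| + O(eps^2)], so minimality forces [|T|^2 <= |K|].
Since [|W_e|^2 = |m_e|], taking [P = {e, f}] gives [W_e . W_f <= 0], strictly
when [e] and [f] carry flow through [v] in opposite directions.  The inflows at
[v] sum to zero, so both directions occur, and a family of pairwise obtuse
vectors whose strict obtuseness graph is connected has rank at least its size
minus one.  Hence [deg v - 1 <= d]. *)

From HB Require Import structures.
From mathcomp Require Import all_boot all_order all_algebra.
From mathcomp Require Import reals.
From mathcomp Require Import ring lra.
Set Implicit Arguments. Unset Strict Implicit. Unset Printing Implicit Defensive.
Import Order.TTheory GRing.Theory Num.Theory.
Local Open Scope ring_scope.

Lemma big_pred2_uniq (I : eqType) (V : nmodType) (s : seq I) a b (f : I -> V) :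
  uniq s -> a \in s -> b \in s -> a != b ->
  \sum_(x <- s | (x == a) || (x == b)) f x = f a + f b.
Proof.
move=> s_uniq a_s b_s ab.
rewrite big_mkcond (bigD1_seq a) //= eqxx /=; congr (_ + _).
rewrite big_mkcond (bigD1_seq b) //= eq_sym ab eqxx orbT /=.
rewrite big1 ?addr0 // => x xb; case: ifP => // xa.
by rewrite (negbTE xb) orbF (negbTE xa).
Qed.

Lemma ltr_normD_mul_lt0 (R : realDomainType) (a b : R) :
  a * b < 0 -> `|a + b| < `|a| + `|b|.
Proof.
move=> ab; have : `|a| * `|b| = - (a * b) by rewrite -normrM ltr0_norm.
have := real_normK (num_real a); have := real_normK (num_real b).
have := real_normK (num_real (a + b)).
have := normr_ge0 a; have := normr_ge0 b; have := normr_ge0 (a + b).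
nra.
Qed.

Lemma exists_small_pos (R : realFieldType) (a b C : R) : 0 < a -> 0 < b -> 0 <= C ->
  exists2 eps, 0 < eps & eps < a /\ eps * C < b.
Proof.
move=> a0 b0 C0; exists (Num.min (a / 2) (b / (C + 1))).
  by rewrite lt_min !divr_gt0 //; lra.
split; first by rewrite gt_min; apply/orP; left; lra.
have le : Num.min (a / 2) (b / (C + 1)) <= b / (C + 1) by rewrite ge_min lexx orbT.
have lt : b / (C + 1) * C < b by rewrite mulrAC ltr_pdivrMr; nra.
by apply: le_lt_trans lt; rewrite ler_wpM2r.
Qed.

Section Dot.
Variables (R : realDomainType) (d : nat).
Implicit Types (x y z : 'rV[R]_d).

Definition dot x y : R := \sum_(k < d) x ord0 k * y ord0 k.

Lemma dotC x y : dot x y = dot y x.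
Proof. by apply: eq_bigr => k _; rewrite mulrC. Qed.

Lemma dotDl x y z : dot (x + y) z = dot x z + dot y z.
Proof. by rewrite /dot -big_split; apply: eq_bigr => k _; rewrite mxE mulrDl. Qed.

Lemma dotZl a x y : dot (a *: x) y = a * dot x y.
Proof. by rewrite /dot mulr_sumr; apply: eq_bigr => k _; rewrite mxE mulrA. Qed.

Lemma dotBl x y z : dot (x - y) z = dot x z - dot y z.
Proof. by rewrite dotDl -scaleN1r dotZl mulN1r. Qed.

Lemma dot0l y : dot 0 y = 0.
Proof. by rewrite /dot big1 // => k _; rewrite mxE mul0r. Qed.

Lemma dotDr x y z : dot x (y + z) = dot x y + dot x z.
Proof. by rewrite dotC dotDl !(dotC x). Qed.

Lemma dotZr a x y : dot x (a *: y) = a * dot x y.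
Proof. by rewrite dotC dotZl dotC. Qed.

Lemma dotBr x y z : dot x (y - z) = dot x y - dot x z.
Proof. by rewrite dotC dotBl !(dotC x). Qed.

Lemma dot_suml (I : Type) (r : seq I) (P : pred I) (F : I -> 'rV[R]_d) y :
  dot (\sum_(i <- r | P i) F i) y = \sum_(i <- r | P i) dot (F i) y.
Proof. exact: (big_morph (fun x => dot x y) (fun a b => dotDl a b y) (dot0l y)). Qed.

Lemma dot_sumr (I : Type) (r : seq I) (P : pred I) (F : I -> 'rV[R]_d) y :
  dot y (\sum_(i <- r | P i) F i) = \sum_(i <- r | P i) dot y (F i).
Proof. by rewrite dotC dot_suml; apply: eq_bigr => i _; apply: dotC. Qed.

Lemma dotxx_ge0 x : 0 <= dot x x.
Proof. by apply: sumr_ge0 => k _; rewrite -expr2 sqr_ge0. Qed.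

Lemma dotxx_eq0 x : dot x x = 0 -> x = 0.
Proof.
move=> /eqP; rewrite psumr_eq0 => [/allP x0|k _]; last by rewrite -expr2 sqr_ge0.
apply/rowP => k; rewrite mxE; apply/eqP; rewrite -sqrf_eq0 expr2.
by have := x0 k (mem_index_enum _); rewrite implyTb.
Qed.

End Dot.

Section Norm.
Variables (R : rcfType) (d : nat).
Implicit Types (x y : 'rV[R]_d).

Definition nrm x : R := Num.sqrt (dot x x).

Lemma nrm_ge0 x : 0 <= nrm x.
Proof. exact: sqrtr_ge0. Qed.

Lemma nrm_sq x : nrm x ^+ 2 = dot x x.
Proof. by rewrite sqr_sqrtr // dotxx_ge0. Qed.

Lemma nrm_gt0 x : x != 0 -> 0 < nrm x.
Proof.
move=> x0; rewrite lt_neqAle nrm_ge0 andbT; apply: contra x0 => /eqP nx0.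
by apply/eqP/dotxx_eq0; rewrite -nrm_sq -nx0 expr0n.
Qed.

Lemma nrmZ a x : nrm (a *: x) = `|a| * nrm x.
Proof. by rewrite /nrm dotZl dotZr mulrA -expr2 sqrtrM ?sqr_ge0 // sqrtr_sqr. Qed.

(* From [2 |y| |y - eps T| <= |y|^2 + |y - eps T|^2]. *)
Lemma nrm_subZ_le y T eps : y != 0 ->
  nrm (y - eps *: T) <= nrm y - eps * dot y T / nrm y + eps ^+ 2 * dot T T / (2 * nrm y).
Proof.
move=> y0; have ny0 := nrm_gt0 y0.
have z2 : nrm (y - eps *: T) ^+ 2 = nrm y ^+ 2 - 2 * eps * dot y T + eps ^+ 2 * dot T T.
  by rewrite !nrm_sq !dotBl !dotBr !dotZl !dotZr (dotC T y); ring.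
rewrite -(ler_pM2l (_ : 0 < 2 * nrm y)) ?mulr_gt0 //.
have -> : 2 * nrm y * (nrm y - eps * dot y T / nrm y + eps ^+ 2 * dot T T / (2 * nrm y))
    = nrm y ^+ 2 + nrm (y - eps *: T) ^+ 2.
  by rewrite z2; field; rewrite gt_eqF.
have := sqr_ge0 (nrm y - nrm (y - eps *: T)); nra.
Qed.

Lemma exists_isolation_radius (s : seq 'rV[R]_d) v :
  exists2 r : R, 0 < r & forall p, p \in s -> p != v -> r < nrm (p - v).
Proof.
elim: s => [|p s [r r0 IH]]; first by exists 1.
have [->|pv] := eqVneq p v.
  by exists r => // q; rewrite in_cons => /predU1P [-> /eqP|]; last exact: IH.
have np : 0 < nrm (p - v) by rewrite nrm_gt0 // subr_eq0.
exists (Num.min r (nrm (p - v) / 2)); first by rewrite lt_min r0 divr_gt0.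
move=> q; rewrite in_cons => /predU1P [-> _|qs qv].
  by rewrite gt_min; apply/orP; right; lra.
by rewrite gt_min IH.
Qed.

End Norm.

Section ObtuseRelation.
Variables (R : realFieldType) (d : nat) (I : finType).
Variables (W : I -> 'rV[R]_d) (S : I -> R).
Hypothesis W_obtuse : forall i j, i != j -> dot (W i) (W j) <= 0.

(* The positive and negative parts of the relation give the same vector [z],
   and [dot z z] is a sum of products [c i * (- c j) * dot (W i) (W j) <= 0]. *)
Lemma obtuse_relation_pos_part (c : I -> R) :
  \sum_i c i *: W i = 0 -> \sum_(i | 0 < c i) c i *: W i = 0.
Proof.
rewrite (bigID (fun i => 0 < c i)) /= => /eqP; rewrite addr_eq0 => /eqP zE.
set z := \sum_(i | 0 < c i) _ in zE *.
apply: dotxx_eq0; apply/eqP; rewrite eq_le dotxx_ge0 andbT.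
rewrite {2}zE -sumrN /z dot_suml; apply: sumr_le0 => i ci.
rewrite dotZl dot_sumr mulr_sumr; apply: sumr_le0 => j; rewrite -leNgt => cj.
rewrite -scaleNr dotZr mulrA; apply: mulr_ge0_le0; first by rewrite mulr_ge0 ?oppr_ge0 // ltW.
by apply: W_obtuse; apply: contraTneq ci => ->; rewrite -leNgt.
Qed.

Lemma obtuse_relation_orthogonal (c : I -> R) i k :
  \sum_i c i *: W i = 0 -> 0 < c i -> c k <= 0 -> dot (W i) (W k) = 0.
Proof.
move=> /obtuse_relation_pos_part /(congr1 (fun x => dot x (W k))).
rewrite dot_suml dot0l => /eqP; rewrite -oppr_eq0 -sumrN => /eqP sum0 ci ck.
have terms_ge0 j : 0 < c j -> 0 <= - dot (c j *: W j) (W k).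
  move=> cj; rewrite dotZl oppr_ge0 mulr_ge0_le0 ?(ltW cj) ?W_obtuse //.
  by apply: contraTneq cj => ->; rewrite -leNgt.
have /eqP := psumr_eq0P terms_ge0 sum0 ci.
by rewrite dotZl oppr_eq0 mulf_eq0 gt_eqF //= => /eqP.
Qed.

Hypothesis S_neq0 : forall i, S i != 0.
Hypothesis S_sum : \sum_i S i = 0.
Hypothesis W_strict : forall i j, S i * S j < 0 -> dot (W i) (W j) < 0.

Lemma obtuse_relation_nonpos (c : I -> R) k :
  c k = 0 -> \sum_i c i *: W i = 0 -> forall i, c i <= 0.
Proof.
move=> ck rel i; rewrite leNgt; apply/negP => ci.
have same_sign j l : 0 < c j -> c l <= 0 -> 0 < S j * S l.
  move=> cj cl; rewrite lt_def mulf_neq0 ?S_neq0 //= leNgt; apply/negP => /W_strict.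
  by rewrite (obtuse_relation_orthogonal rel cj cl) ltxx.
have ck_le0 : c k <= 0 by rewrite ck.
have same_sign_k j : 0 < S j * S k.
  have [cj|cj] := ltP 0 (c j); first exact: same_sign.
  have := mulr_gt0 (same_sign _ _ ci cj) (same_sign _ _ ci ck_le0).
  have : 0 < S i ^+ 2 by rewrite exprn_even_gt0 //= S_neq0.
  nra.
have : 0 < \sum_j S j * S k.
  rewrite (bigD1 k) //=; apply: ltr_wpDr; last exact: same_sign_k.
  by apply: sumr_ge0 => j _; apply: ltW.
by rewrite -mulr_suml S_sum mul0r ltxx.
Qed.

Lemma obtuse_relation_trivial (c : I -> R) k :
  c k = 0 -> \sum_i c i *: W i = 0 -> forall i, c i = 0.
Proof.
move=> ck rel i; apply/eqP; rewrite eq_le (obtuse_relation_nonpos ck rel) /=.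
rewrite -oppr_le0; apply: (@obtuse_relation_nonpos (fun i => - c i) k).
  by rewrite ck oppr0.
by under eq_bigr do rewrite scaleNr; rewrite sumrN rel oppr0.
Qed.

End ObtuseRelation.

(* Dropping one vector leaves a linearly independent family. *)
Lemma signed_obtuse_family_size_le (R : realFieldType) (d n : nat)
    (W : 'I_n.+1 -> 'rV[R]_d) (S : 'I_n.+1 -> R) :
  (forall i, S i != 0) -> \sum_i S i = 0 ->
  (forall i j, i != j -> dot (W i) (W j) <= 0) ->
  (forall i j, S i * S j < 0 -> dot (W i) (W j) < 0) -> (n <= d)%N.
Proof.
move=> S_neq0 S_sum W_obtuse W_strict.
pose M : 'M[R]_(n, d) := \matrix_(i, k) W (lift ord_max i) ord0 k.
suff /eqP <- : row_free M by apply: rank_leq_col.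
apply: inj_row_free => u uM0.
pose c j := if unlift ord_max j is Some i then u ord0 i else 0.
have c_max : c ord_max = 0 by rewrite /c unlift_none.
have rel : \sum_j c j *: W j = 0.
  rewrite big_ord_recr /= c_max scale0r addr0 -[RHS]uM0.
  apply/rowP => k; rewrite summxE !mxE; apply: eq_bigr => i _.
  have -> : widen_ord (leqnSn n) i = lift ord_max i.
    by apply: val_inj; rewrite /= /bump leqNgt ltn_ord.
  by rewrite !mxE /c liftK.
apply/rowP => i; rewrite mxE.
have := obtuse_relation_trivial W_obtuse S_neq0 S_sum W_strict c_max rel (lift ord_max i).
by rewrite /c liftK.
Qed.

Ltac case_eqs := repeat (rewrite ?eqxx /=; try done; match goal with
 | H : is_true (?x != ?x) |- _ => by rewrite eqxx in H
 | |- context [?x == ?y] => is_var x; is_var y;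
     let h := fresh in have [h|h] := eqVneq x y;
     [subst | let h' := fresh in have h' := h; rewrite eq_sym in h';
              rewrite ?(negbTE h) ?(negbTE h')]
 end).

Section Edges.
Variables (R : realType) (d : nat).
Local Notation point := 'rV[R]_d.
Local Notation edge := (point * point * R)%type.
Implicit Types (v w z : point) (e f : edge).

Lemma edistE (x y : point) : edist x y = nrm (x - y).
Proof.
by rewrite /edist /nrm /dot; congr Num.sqrt; apply: eq_bigr => k _; rewrite !mxE expr2.
Qed.

Lemma edistC (x y : point) : edist x y = edist y x.
Proof. by rewrite !edistE -opprB -scaleN1r nrmZ normrN normr1 mul1r. Qed.

Definition incident v e : bool := (e.1.1 == v) || (e.1.2 == v).

Definition inflow e z : R := e.2 * ((z == e.1.2)%:R - (z == e.1.1)%:R).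

Definition far_end v e : point := if e.1.1 == v then e.1.2 else e.1.1.

Definition reroute v w e : edge :=
  ((if e.1.1 == v then w else e.1.1, if e.1.2 == v then w else e.1.2), e.2).

Definition endpoints (s : seq edge) : seq point :=
  [seq e.1.1 | e <- s] ++ [seq e.1.2 | e <- s].

Lemma endpointsP s e p : e \in s -> incident p e -> p \in endpoints s.
Proof.
move=> es /orP[]/eqP <-; rewrite mem_cat.
  by rewrite (map_f (fun e : edge => e.1.1)).
by rewrite (map_f (fun e : edge => e.1.2)) ?orbT.
Qed.

Lemma far_end_neq v e : incident v e -> e.1.1 != e.1.2 -> far_end v e != v.
Proof. by case: e => [[a b] m]; rewrite /incident /far_end /=; case_eqs. Qed.

Lemma reroute_id v e : reroute v v e = e.
Proof. by case: e => [[a b] m]; rewrite /reroute /=; case_eqs. Qed.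

Lemma edist_reroute v w e : incident v e -> e.1.1 != e.1.2 ->
  edist (reroute v w e).1.1 (reroute v w e).1.2 = edist (far_end v e) w.
Proof.
case: e => [[a b] m]; rewrite /incident /reroute /far_end /=.
have [->|av] := eqVneq a v; last by move=> /= /eqP ->; rewrite eqxx.
by move=> _ vb; rewrite eq_sym (negbTE vb) edistC.
Qed.

Lemma edist_far_end v e : incident v e -> e.1.1 != e.1.2 ->
  edist e.1.1 e.1.2 = edist (far_end v e) v.
Proof. by move=> ve ne; rewrite -(edist_reroute v ve ne) reroute_id. Qed.

Lemma inflow_norm v e : incident v e -> e.1.1 != e.1.2 -> `|inflow e v| = `|e.2|.
Proof.
case: e => [[a b] m]; rewrite /incident /inflow /=.
have [->|av] := eqVneq a v; last by move=> /= /eqP ->; rewrite eqxx subr0 mulr1.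
by move=> _ vb; rewrite (negbTE vb) sub0r mulrN1 normrN.
Qed.

Lemma inflow_reroute v w e z : w != v -> ~~ incident w e ->
  inflow (reroute v w e) z = inflow e z - (z == v)%:R * inflow e v + (z == w)%:R * inflow e v.
Proof.
case: e => [[a b] m]; rewrite /inflow /reroute /incident /= negb_or => wv /andP[aw bw].
by case_eqs; ring.
Qed.

Lemma same_pairC e f : same_pair e f = same_pair f e.
Proof. by case: e f => [[a b] m] [[a' b'] m']; rewrite /same_pair /=; case_eqs. Qed.

Lemma same_pair_incident w e f : incident w e -> ~~ incident w f -> ~~ same_pair e f.
Proof.
by case: e f => [[a b] m] [[a' b'] m']; rewrite /same_pair /incident /= negb_or; case_eqs.
Qed.

Lemma incident_reroute v w e : incident v e -> incident w (reroute v w e).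
Proof. by case: e => [[a b] m]; rewrite /incident /reroute /=; case_eqs. Qed.

Lemma same_pair_reroute v w e f : w != v -> ~~ incident w e -> ~~ incident w f ->
  e.1.1 != e.1.2 -> f.1.1 != f.1.2 -> incident v e -> incident v f ->
  same_pair (reroute v w e) (reroute v w f) -> same_pair e f.
Proof.
case: e f => [[a b] m] [[a' b'] m'].
by rewrite /same_pair /reroute /incident /= !negb_or; case_eqs.
Qed.

Lemma same_pair_reroute_link v w K e : w != v -> ~~ incident w e ->
  incident v e -> e.1.1 != e.1.2 -> ~~ same_pair (reroute v w e) (w, v, K).
Proof.
by case: e => [[a b] m]; rewrite /same_pair /reroute /incident /= negb_or; case_eqs.
Qed.

End Edges.

Section SplitFlow.
Variables (R : realType) (d : nat).
Local Notation point := 'rV[R]_d.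
Local Notation edge := (point * point * R)%type.

Definition bundle_inflow (F : flow R d) (P : pred edge) (v : point) : R :=
  \sum_(e <- fE F | P e) inflow e v.

(* The link edge [(w, v, K)] is omitted when [K = 0], since flow edges carry
   nonzero masses. *)
Definition split_flow (F : flow R d) (v w : point) (P : pred edge) : flow R d :=
  let K := bundle_inflow F P v in
  Flow (w :: fV F)
    ([seq e <- fE F | ~~ P e] ++ map (reroute v w) [seq e <- fE F | P e] ++
     (if K == 0 then [::] else [:: (w, v, K)])).

Variables (mup mum : point -> R) (F : flow R d) (v w : point) (P : pred edge).
Hypothesis F_flow : is_flow mup mum F.
Hypothesis v_vertex : v \in fV F.
Hypothesis wv : w != v.
Hypothesis w_fresh : forall e, e \in fE F -> ~~ incident w e.
Hypothesis P_incident : forall e, e \in fE F -> P e -> incident v e.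

Let K := bundle_inflow F P v.

Lemma split_flow_edges e : e \in fE (split_flow F v w P) ->
  [/\ e.1.1 \in fV (split_flow F v w P), e.1.2 \in fV (split_flow F v w P),
      e.1.1 != e.1.2 & e.2 != 0].
Proof.
have [_ F_edges _ _] := F_flow.
rewrite /= !mem_cat => /or3P [ | | ].
- rewrite mem_filter => /andP [_ eF]; have [e1 e2 ne m0] := F_edges e eF.
  by split; rewrite // in_cons ?e1 ?e2 orbT.
- move=> /mapP [f]; rewrite mem_filter => /andP [Pf fF] ->.
  have [f1 f2 nf m0] := F_edges f fF.
  split => //=; first by case: ifP => _; rewrite in_cons ?eqxx ?f1 ?orbT.
    by case: ifP => _; rewrite in_cons ?eqxx ?f2 ?orbT.
  move: (P_incident fF Pf) (w_fresh fF) nf.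
  by case: f {f1 f2 m0 Pf fF} => [[a b] m]; rewrite /incident /= negb_or; case_eqs.
- case: eqP => // K0; rewrite inE => /eqP -> /=.
  by split; rewrite ?in_cons ?eqxx ?v_vertex ?orbT //; apply/eqP.
Qed.

Let not_same := fun e f : edge => ~~ same_pair e f.

Lemma split_flow_pairwise : pairwise not_same (fE (split_flow F v w P)).
Proof.
have [_ F_edges F_pairwise _] := F_flow.
have rerouted_fresh e : e \in [seq e <- fE F | P e] -> incident w (reroute v w e).
  by rewrite mem_filter => /andP [Pe eF]; apply/incident_reroute/P_incident.
rewrite /split_flow /=; set link := if _ then _ else _.
have link_fresh f : f \in link -> incident w f.
  by rewrite /link; case: ifP => // _; rewrite inE => /eqP ->; rewrite /incident eqxx.
have old_new f g : f \in fE F -> incident w g -> not_same f g.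
  by move=> fF wg; rewrite /not_same same_pairC (same_pair_incident wg) ?w_fresh.
rewrite !pairwise_cat !allrel_catr (pairwise_filter _ F_pairwise).
have -> : allrel not_same [seq e <- fE F | ~~ P e] (map (reroute v w) [seq e <- fE F | P e]).
  apply/allrelP => f g; rewrite mem_filter => /andP [_ fF] /mapP [e eP ->].
  exact/old_new/rerouted_fresh.
have -> : allrel not_same [seq e <- fE F | ~~ P e] link.
  apply/allrelP => f g; rewrite mem_filter => /andP [_ fF] /link_fresh.
  exact: old_new.
have -> : allrel not_same (map (reroute v w) [seq e <- fE F | P e]) link.
  rewrite /link; case: eqP => _; first exact: allrel0r.
  rewrite allrel1r; apply/allP => g /mapP [e]; rewrite mem_filter => /andP [Pe eF] ->.
  have [_ _ ne _] := F_edges e eF.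
  exact: same_pair_reroute_link wv (w_fresh eF) (P_incident eF Pe) ne.
have -> : pairwise not_same link by rewrite /link; case: eqP.
rewrite /= andbT pairwise_map.
apply: (sub_in_pairwise (P := mem [seq e <- fE F | P e]) (r := not_same)); last 2 first.
- exact/allP.
- exact: pairwise_filter.
move=> e f; rewrite !mem_filter => /andP [Pe eF] /andP [Pf fF].
have [_ _ ne _] := F_edges e eF; have [_ _ nf _] := F_edges f fF.
apply: contra; apply: same_pair_reroute ne nf (P_incident eF Pe) (P_incident fF Pf) => //;
  exact: w_fresh.
Qed.

Lemma split_flow_balance z : mup z - mum z =
  \sum_(e <- fE (split_flow F v w P)) e.2 * ((z == e.1.2)%:R - (z == e.1.1)%:R).
Proof.
have [_ _ _ F_balance] := F_flow.
rewrite F_balance /= !big_cat /= big_map !big_filter.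
have -> : \sum_(e <- fE F | P e) (reroute v w e).2 *
      ((z == (reroute v w e).1.2)%:R - (z == (reroute v w e).1.1)%:R) =
    \sum_(e <- fE F | P e) inflow e z - (z == v)%:R * K + (z == w)%:R * K.
  rewrite /K /bundle_inflow !mulr_sumr -sumrN -!big_split /=.
  rewrite big_seq_cond [RHS]big_seq_cond; apply: eq_bigr => e /andP [eF _].
  by rewrite -[LHS]/(inflow (reroute v w e) z) inflow_reroute ?w_fresh // mulrN.
rewrite (bigID P) /= -/K; case: (eqVneq K 0) => [->|K0].
  by rewrite big_nil /inflow; ring.
by rewrite big_seq1 /inflow /=; ring.
Qed.

Lemma split_flow_is_flow : is_flow mup mum (split_flow F v w P).
Proof.
have [F_vertices _ _ _] := F_flow.
split; [|exact: split_flow_edges|exact: split_flow_pairwise|exact: split_flow_balance].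
by move=> x /F_vertices xV; rewrite in_cons xV orbT.
Qed.

End SplitFlow.

Section Pull.
Variables (R : realType) (d : nat).
Local Notation point := 'rV[R]_d.
Local Notation edge := (point * point * R)%type.

Definition pull (v : point) (e : edge) : point :=
  (Num.sqrt `|e.2| / nrm (far_end v e - v)) *: (far_end v e - v).

Definition bundle_pull (F : flow R d) (P : pred edge) (v : point) : point :=
  \sum_(e <- fE F | P e) pull v e.

Lemma pull_dot_self v e : incident v e -> e.1.1 != e.1.2 ->
  dot (pull v e) (pull v e) = `|inflow e v|.
Proof.
move=> ve ne; have far_gt0 : 0 < nrm (far_end v e - v).
  by rewrite nrm_gt0 // subr_eq0 far_end_neq.
rewrite inflow_norm // /pull dotZl dotZr -nrm_sq -[X in _ = X]sqr_sqrtr //.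
by field; rewrite gt_eqF.
Qed.

Lemma split_flow_cost_le (mup mum : point -> R) (F : flow R d) v (P : pred edge) :
  is_flow mup mum F -> (forall e, e \in fE F -> P e -> incident v e) ->
  let T := bundle_pull F P v in
  exists2 C, 0 <= C & forall eps, 0 <= eps ->
    gilbert_cost (split_flow F v (v + eps *: T) P) <=
    gilbert_cost F - eps * dot T T + eps ^+ 2 * C
      + Num.sqrt `|bundle_inflow F P v| * (eps * nrm T).
Proof.
move=> [_ F_edges _ _] P_incident T.
pose C := \sum_(e <- fE F | P e) Num.sqrt `|e.2| * dot T T / (2 * nrm (far_end v e - v)).
have far_ne e : e \in fE F -> P e -> far_end v e - v != 0.
  by move=> eF Pe; have [_ _ ne _] := F_edges e eF; rewrite subr_eq0 far_end_neq ?P_incident.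
exists C.
  apply: sumr_ge0 => e /far_ne /nrm_gt0 far_gt0.
  by rewrite divr_ge0 ?mulr_ge0 ?sqrtr_ge0 ?dotxx_ge0 ?ltW.
move=> eps eps0; set w := v + eps *: T.
rewrite /gilbert_cost /split_flow /= !big_cat big_map !big_filter.
rewrite [in X in _ <= X](bigID P) /=.
have link_cost : \sum_(e <- if bundle_inflow F P v == 0 then [::] else [:: (w, v, bundle_inflow F P v)])
    Num.sqrt `|e.2| * edist e.1.1 e.1.2 <= Num.sqrt `|bundle_inflow F P v| * (eps * nrm T).
  case: ifP => _; rewrite ?big_nil ?big_seq1 /=.
    by rewrite mulr_ge0 ?sqrtr_ge0 ?mulr_ge0 ?nrm_ge0.
  by rewrite edistE /w addrAC subrr add0r nrmZ (ger0_norm eps0).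
have rerouted_cost : \sum_(e <- fE F | P e) Num.sqrt `|(reroute v w e).2| *
      edist (reroute v w e).1.1 (reroute v w e).1.2 <=
    \sum_(e <- fE F | P e) Num.sqrt `|e.2| * edist e.1.1 e.1.2 - eps * dot T T + eps ^+ 2 * C.
  rewrite {2}/T /bundle_pull dot_suml /C mulr_sumr mulr_sumr -sumrN -!big_split /=.
  rewrite big_seq_cond [X in _ <= X]big_seq_cond; apply: ler_sum => e /andP [eF Pe].
  have [_ _ ne _] := F_edges e eF; have ve := P_incident e eF Pe.
  rewrite edist_reroute // (edist_far_end ve ne) !edistE /w opprD addrA.
  have := nrm_subZ_le T eps (far_ne e eF Pe) => le.
  rewrite (le_trans (ler_wpM2l (sqrtr_ge0 _) le)) // /pull dotZl le_eqVlt; apply/orP; left.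
  by apply/eqP; field; rewrite gt_eqF ?nrm_gt0 ?far_ne.
lra.
Qed.


Lemma solution_bundle_pull_le (mup mum : point -> R) (F : flow R d) v (P : pred edge) :
  is_solution mup mum F -> v \in fV F -> (forall e, e \in fE F -> P e -> incident v e) ->
  dot (bundle_pull F P v) (bundle_pull F P v) <= `|bundle_inflow F P v|.
Proof.
move=> [F_flow F_min] vV P_incident.
have [C C0 cost_le] := split_flow_cost_le F_flow P_incident.
move: cost_le; set T := (bundle_pull F P v); set K := (bundle_inflow F P v) => cost_le.
rewrite leNgt; apply/negP => KT.
set tau := nrm T.
have TT0 : 0 < dot T T by apply: le_lt_trans KT.
have tau0 : 0 < tau by rewrite sqrtr_gt0.
have sqrtK : Num.sqrt `|K| < tau by rewrite ltr_sqrt.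
have [r r0 r_iso] := exists_isolation_radius (endpoints (fE F)) v.
have gain : 0 < tau ^+ 2 - Num.sqrt `|K| * tau by have := sqrtr_ge0 `|K|; nra.
have [eps eps0 [eps_r eps_C]] := exists_small_pos (divr_gt0 r0 tau0) gain C0.
set w := v + eps *: T.
have wv_nrm : nrm (w - v) = eps * tau by rewrite /w addrAC subrr add0r nrmZ gtr0_norm.
have wv : w != v.
  apply/eqP => wv; move: wv_nrm; rewrite wv subrr /nrm dot0l sqrtr0.
  by have := mulr_gt0 eps0 tau0; lra.
have w_fresh e : e \in fE F -> ~~ incident w e.
  move=> eF; apply/negP => /(endpointsP eF) /r_iso /(_ wv).
  by rewrite wv_nrm; move: eps_r; rewrite ltr_pdivlMr //; lra.
have := F_min _ (split_flow_is_flow F_flow vV wv w_fresh P_incident).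
have := cost_le eps (ltW eps0); rewrite -/w -nrm_sq -/tau.
nra.
Qed.

End Pull.

Section FlowFacts.
Variables (R : realType) (d : nat) (mup mum : 'rV[R]_d -> R) (F : flow R d).
Hypothesis F_flow : is_flow mup mum F.

Lemma flow_edges_uniq : uniq (fE F).
Proof.
have [_ _ F_pairwise _] := F_flow.
by apply: (pairwise_uniq _ F_pairwise) => e; rewrite /same_pair !eqxx.
Qed.

Lemma inflow_neq0 v e : e \in fE F -> incident v e -> inflow e v != 0.
Proof.
move=> eF ve; have [_ F_edges _ _] := F_flow; have [_ _ ne m0] := F_edges e eF.
by rewrite -normr_eq0 inflow_norm // normr_eq0.
Qed.

Lemma incident_inflow_sum v :
  \sum_(e <- fE F | incident v e) inflow e v = mup v - mum v.
Proof.
have [_ _ _ ->] := F_flow; rewrite big_mkcond; apply: eq_bigr => e _.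
case: ifP => // /negbT; rewrite /incident negb_or => /andP [ev ev'].
by rewrite /inflow !(eq_sym v) (negbTE ev) (negbTE ev') subrr mulr0.
Qed.

End FlowFacts.

Section Branching.
Variables (R : realType) (d : nat).
Local Notation point := 'rV[R]_d.
Local Notation edge := (point * point * R)%type.
Variables (mup mum : point -> R) (F : flow R d) (v : point).
Hypothesis F_solution : is_solution mup mum F.
Hypothesis v_vertex : v \in fV F.

Let F_flow : is_flow mup mum F := F_solution.1.

Lemma solution_pull_pair e f : e \in fE F -> f \in fE F -> e != f ->
  incident v e -> incident v f ->
  `|inflow e v| + `|inflow f v| + 2 * dot (pull v e) (pull v f)
    <= `|inflow e v + inflow f v|.
Proof.
move=> eF fF ef ve vf; have [_ F_edges _ _] := F_flow.
have [_ _ ne _] := F_edges e eF; have [_ _ nf _] := F_edges f fF.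
have pair_incident g : g \in fE F -> (g == e) || (g == f) -> incident v g.
  by move=> _ /orP[] /eqP ->.
have := solution_bundle_pull_le F_solution v_vertex pair_incident.
rewrite /bundle_pull /bundle_inflow !big_pred2_uniq ?(flow_edges_uniq F_flow) //.
rewrite !dotDl !dotDr (dotC (pull v f)) -!pull_dot_self //.
by apply: le_trans; rewrite le_eqVlt; apply/orP; left; apply/eqP; ring.
Qed.

Lemma solution_pull_obtuse e f : e \in fE F -> f \in fE F -> e != f ->
  incident v e -> incident v f -> dot (pull v e) (pull v f) <= 0.
Proof.
move=> eF fF ef ve vf; have := solution_pull_pair eF fF ef ve vf.
by have := ler_normD (inflow e v) (inflow f v); lra.
Qed.

Lemma solution_pull_strict e f : e \in fE F -> f \in fE F ->
  incident v e -> incident v f -> inflow e v * inflow f v < 0 ->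
  dot (pull v e) (pull v f) < 0.
Proof.
move=> eF fF ve vf opp.
have ef : e != f by apply: contraTneq opp => ->; rewrite -leNgt -expr2 sqr_ge0.
have := solution_pull_pair eF fF ef ve vf.
by have := ltr_normD_mul_lt0 opp; lra.
Qed.

End Branching.

Theorem proposition1 (R : realType) (d : nat) (hd : (2 <= d)%N)
  (mup mum : 'rV[R]_d -> R)
  (hp : fin_supp_measure mup) (hm : fin_supp_measure mum)
  (hmass : equal_mass mup mum)
  (F : flow R d) (hF : is_solution mup mum F)
  (v : 'rV[R]_d) (hv : is_branching_point mup mum F v) :
  (degree F v <= d.+1)%N.
Proof.
have [F_flow _] := hF; case: hv => vV mup0 mum0.
set I := [seq e <- fE F | incident v e].
have -> : degree F v = size I by rewrite size_filter.
case sizeI: (size I) => [//|n].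
pose E (i : 'I_n.+1) := nth (0, 0, 0) I i.
have E_in i : E i \in fE F /\ incident v (E i).
  by have := @mem_nth _ (0, 0, 0) I i; rewrite sizeI mem_filter => /(_ (ltn_ord i)) /andP[].
have E_neq i j : i != j -> E i != E j.
  by rewrite nth_uniq ?sizeI ?filter_uniq ?(flow_edges_uniq F_flow).
apply: (@signed_obtuse_family_size_le _ _ _ (fun i => pull v (E i)) (fun i => inflow (E i) v)).
- by move=> i; have [eF ve] := E_in i; exact: (inflow_neq0 F_flow eF ve).
- have : \sum_(e <- I) inflow e v = 0.
    by rewrite big_filter (incident_inflow_sum F_flow) mup0 mum0 subrr.
  by rewrite (big_nth (0, 0, 0)) sizeI big_mkord.
- move=> i j /E_neq ij; have [eF ve] := E_in i; have [fF vf] := E_in j.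
  exact: (solution_pull_obtuse hF vV eF fF ij ve vf).
- move=> i j; have [eF ve] := E_in i; have [fF vf] := E_in j.
  exact: (solution_pull_strict hF vV eF fF ve vf).
Qed.
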